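(* Let $\alpha>0$, $\beta\in\mathbb{R}$, $\gamma>0$, and let $Q(z)=\sinh[\alpha(z-\beta)]$, so $q(z)=Q'(z)=\alpha\cosh[\alpha(z-\beta)]$, and $p(z)=1/\{1+\exp[-\sinh(\alpha(z-\beta))/\gamma]\}$. Let $H(z)=\gamma\log(1+e^{Q(z)/\gamma})$ and $\mathcal{L}_m(\hat s,s)=H(\hat s)-H(s)-(\hat s-s)H'(s)$. If $\gamma\le1/\sqrt2$, then $\mathcal{L}_m(\hat s,s)$ is convex in $\hat s\in\mathbb{R}$ for every $s\in\mathbb{R}$ (i.e. a convex selective matching loss with this scaling exists).
   Context: $H$ is the $\gamma$-regularized composite Softplus primitive, with link $H'(z)=q(z)p(z)$. *)

From Stdlib Require Import Reals.
Open Scope R_scope.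

Definition Qf (alpha beta z : R) : R := sinh (alpha * (z - beta)).

Definition qf (alpha beta z : R) : R := alpha * cosh (alpha * (z - beta)).

Definition pf (alpha beta gamma z : R) : R :=
  1 / (1 + exp (- sinh (alpha * (z - beta)) / gamma)).

Definition Hf (alpha beta gamma z : R) : R :=
  gamma * ln (1 + exp (Qf alpha beta z / gamma)).

(* H'(z) = q(z) p(z)  (the link of H, as in the paper) *)
Definition Hlink (alpha beta gamma z : R) : R :=
  qf alpha beta z * pf alpha beta gamma z.

Definition Lm (alpha beta gamma shat s : R) : R :=
  Hf alpha beta gamma shat - Hf alpha beta gamma s
  - (shat - s) * Hlink alpha beta gamma s.

Definition convex_on_R (f : R -> R) : Prop :=
  forall x y t : R, 0 <= t <= 1 ->
    f (t * x + (1 - t) * y) <= t * f x + (1 - t) * f y.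

(* L_m(., s) differs from H by an affine function, so it is convex as soon as
   the link H' = q p is nondecreasing.  Writing S = sinh(alpha (z - beta)) and
   E = exp(-S/gamma), one has
     (q p)' = alpha^2 (S (1 + E) + (1 + S^2) E / gamma) / (1 + E)^2.
   The numerator is clearly nonnegative when S >= 0; when S < 0 we have E >= 1,
   and gamma <= 1 bounds it below by (1 + S)^2 + (E - 1) (S^2 + S + 1) >= 0. *)

From Stdlib Require Import Reals Lra Psatz.
From Coquelicot Require Import Coquelicot.
Open Scope R_scope.

Lemma continuity_pt_of_is_derive (f : R -> R) (x l : R) :
  is_derive f x l -> continuity_pt f x.
Proof.
  intros Hd. apply continuity_pt_filterlim.
  apply (ex_derive_continuous (V := R_NormedModule)).
  exists l. exact Hd.
Qed.

Lemma mean_value (f df : R -> R) :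
  (forall x, is_derive f x (df x)) ->
  forall x y, exists c, Rmin x y <= c <= Rmax x y /\ f y - f x = df c * (y - x).
Proof.
  intros Hd x y.
  apply MVT_gen.
  - intros c _. apply Hd.
  - intros c _. apply (continuity_pt_of_is_derive f c (df c)), Hd.
Qed.

Lemma nondecreasing_of_derive_nonneg (f df : R -> R) :
  (forall x, is_derive f x (df x)) -> (forall x, 0 <= df x) ->
  forall x y, x <= y -> f x <= f y.
Proof.
  intros Hd Hpos x y Hxy.
  destruct (mean_value f df Hd x y) as [c [_ Hc]].
  pose proof (Hpos c). nra.
Qed.

Lemma tangent_le_of_derive_nondecreasing (f df : R -> R) :
  (forall x, is_derive f x (df x)) -> (forall x y, x <= y -> df x <= df y) ->
  forall x y, f x + df x * (y - x) <= f y.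
Proof.
  intros Hd Hmono x y.
  destruct (mean_value f df Hd x y) as [c [Hc Hf]].
  assert (Hslope : 0 <= (df c - df x) * (y - x)).
  { destruct (Rle_dec x y) as [Hxy | Hyx].
    - rewrite Rmin_left, Rmax_right in Hc by lra.
      pose proof (Hmono x c (proj1 Hc)). nra.
    - rewrite Rmin_right, Rmax_left in Hc by lra.
      pose proof (Hmono c x (proj2 Hc)). nra. }
  nra.
Qed.

Lemma convex_on_R_of_tangent_le (f df : R -> R) :
  (forall x y, f x + df x * (y - x) <= f y) -> convex_on_R f.
Proof.
  intros Htan x y t Ht.
  set (z := t * x + (1 - t) * y).
  pose proof (Htan z x) as Hx. pose proof (Htan z y) as Hy.
  assert (Hcancel : t * (x - z) + (1 - t) * (y - z) = 0) by (unfold z; ring).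
  assert (0 <= t * (f x - (f z + df z * (x - z)))) by (apply Rmult_le_pos; lra).
  assert (0 <= (1 - t) * (f y - (f z + df z * (y - z)))) by (apply Rmult_le_pos; lra).
  nra.
Qed.

Lemma convex_on_R_of_derive_nondecreasing (f df : R -> R) :
  (forall x, is_derive f x (df x)) -> (forall x y, x <= y -> df x <= df y) ->
  convex_on_R f.
Proof.
  intros Hd Hmono.
  apply (convex_on_R_of_tangent_le f df).
  exact (tangent_le_of_derive_nondecreasing f df Hd Hmono).
Qed.

Lemma is_derive_bregman (f df : R -> R) (s x : R) :
  (forall z, is_derive f z (df z)) ->
  is_derive (fun y => f y - f s - (y - s) * df s) x (df x - df s).
Proof.
  intros Hd.
  auto_derive.
  - exists (df x). apply Hd.
  - erewrite is_derive_unique by apply Hd. ring.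
Qed.

Lemma is_derive_softplus_comp (g : R) (Q : R -> R) (z q : R) :
  0 < g -> is_derive Q z q ->
  is_derive (fun y => g * ln (1 + exp (Q y / g))) z
    (q * (1 / (1 + exp (- Q z / g)))).
Proof.
  intros Hg HQ.
  auto_derive.
  - split; [exists q; exact HQ |]. pose proof (exp_pos (Q z / g)). lra.
  - erewrite is_derive_unique by apply HQ.
    replace (- Q z / g) with (- (Q z / g)) by (field; lra).
    rewrite exp_Ropp.
    unfold Rdiv. pose proof (exp_pos (Q z * / g)).
    field. lra.
Qed.

Lemma is_derive_logistic_comp (g : R) (Q : R -> R) (z q : R) :
  0 < g -> is_derive Q z q ->
  is_derive (fun y => 1 / (1 + exp (- Q y / g))) z
    (q * exp (- Q z / g) / (g * (1 + exp (- Q z / g)) ^ 2)).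
Proof.
  intros Hg HQ.
  auto_derive.
  - split; [exists q; exact HQ |]. pose proof (exp_pos (- Q z / g)). lra.
  - erewrite is_derive_unique by apply HQ.
    unfold Rdiv. pose proof (exp_pos (- Q z * / g)).
    field. lra.
Qed.

Lemma is_derive_Qf (a b z : R) : is_derive (Qf a b) z (qf a b z).
Proof. unfold Qf, qf, sinh, cosh. auto_derive; [auto | unfold Rminus; field]. Qed.

Lemma is_derive_qf (a b z : R) : is_derive (qf a b) z (a ^ 2 * Qf a b z).
Proof. unfold Qf, qf, sinh, cosh. auto_derive; [auto | unfold Rminus; field]. Qed.

Lemma is_derive_Hf (a b g z : R) :
  0 < g -> is_derive (Hf a b g) z (Hlink a b g z).
Proof. intros Hg. exact (is_derive_softplus_comp g (Qf a b) z _ Hg (is_derive_Qf a b z)). Qed.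

Lemma is_derive_pf (a b g z : R) :
  0 < g ->
  is_derive (pf a b g) z
    (qf a b z * exp (- Qf a b z / g) / (g * (1 + exp (- Qf a b z / g)) ^ 2)).
Proof. intros Hg. exact (is_derive_logistic_comp g (Qf a b) z _ Hg (is_derive_Qf a b z)). Qed.

Lemma cosh_sqr (x : R) : cosh x ^ 2 = 1 + sinh x ^ 2.
Proof.
  unfold cosh, sinh.
  assert (exp x * exp (- x) = 1) by (rewrite <- exp_plus, Rplus_opp_r; apply exp_0).
  nra.
Qed.

Lemma is_derive_Hlink (a b g z : R) :
  0 < g ->
  let S := Qf a b z in let E := exp (- S / g) in
  is_derive (Hlink a b g) z
    (a ^ 2 * (S * (1 + E) + (1 + S ^ 2) * E / g) / (1 + E) ^ 2).
Proof.
  intros Hg S E.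
  assert (HE : 0 < E) by apply exp_pos.
  unfold Hlink. auto_derive.
  - split; [eexists; apply is_derive_qf |].
    split; [eexists; apply is_derive_pf; exact Hg | exact I].
  - erewrite is_derive_unique by apply is_derive_qf.
    erewrite is_derive_unique by (apply is_derive_pf; exact Hg).
    fold S E. unfold pf, qf. change (sinh (a * (z - b))) with S. fold E.
    replace (1 + S ^ 2) with (cosh (a * (z - b)) ^ 2) by apply cosh_sqr.
    field. lra.
Qed.

Lemma link_slope_numerator_nonneg (S g : R) :
  0 < g <= 1 -> 0 <= S * (1 + exp (- S / g)) + (1 + S ^ 2) * exp (- S / g) / g.
Proof.
  intros [Hg Hg1].
  set (E := exp (- S / g)).
  assert (HE : 0 < E) by apply exp_pos.
  assert (HEg : (1 + S ^ 2) * E <= (1 + S ^ 2) * E / g).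
  { assert (Hinv : 1 <= / g) by (rewrite <- Rinv_1; apply Rinv_le_contravar; lra).
    unfold Rdiv. rewrite <- (Rmult_1_r ((1 + S ^ 2) * E)) at 1.
    apply Rmult_le_compat_l; [nra | exact Hinv]. }
  destruct (Rle_dec 0 S) as [HS | HS].
  - assert (0 <= S * (1 + E)) by nra. nra.
  - assert (HE1 : 1 <= E).
    { assert (0 <= - S / g) by (apply Rdiv_le_0_compat; lra).
      pose proof (exp_ineq1_le (- S / g)) as Hexp. fold E in Hexp. lra. }
    assert (Hsplit : S * (1 + E) + (1 + S ^ 2) * E
                     = (1 + S) ^ 2 + (E - 1) * (S ^ 2 + S + 1)) by ring.
    assert (0 <= (E - 1) * (S ^ 2 + S + 1)) by (apply Rmult_le_pos; nra).
    pose proof (pow2_ge_0 (1 + S)).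
    lra.
Qed.

Lemma Hlink_nondecreasing (a b g : R) :
  0 < g <= 1 -> forall x y, x <= y -> Hlink a b g x <= Hlink a b g y.
Proof.
  intros Hg.
  apply (nondecreasing_of_derive_nonneg _ _ (fun z => is_derive_Hlink a b g z (proj1 Hg))).
  intros z; cbv zeta.
  set (E := exp (- Qf a b z / g)).
  assert (HE : 0 < E) by apply exp_pos.
  apply Rmult_le_pos.
  - apply Rmult_le_pos; [nra | exact (link_slope_numerator_nonneg (Qf a b z) g Hg)].
  - apply Rlt_le, Rinv_0_lt_compat. nra.
Qed.

Lemma inv_sqrt2_le_1 : 1 / sqrt 2 <= 1.
Proof.
  assert (H1 : 1 <= sqrt 2) by (rewrite <- sqrt_1; apply sqrt_le_1_alt; lra).
  apply (Rmult_le_reg_r (sqrt 2)); [lra |]. field_simplify; lra.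
Qed.

Theorem corollaryG4 (alpha beta gamma : R) :
  0 < alpha -> 0 < gamma -> gamma <= 1 / sqrt 2 ->
  forall s : R, convex_on_R (fun shat => Lm alpha beta gamma shat s).
Proof.
  intros _ Hg Hg2 s.
  assert (Hg1 : 0 < gamma <= 1) by (pose proof inv_sqrt2_le_1; lra).
  apply (convex_on_R_of_derive_nondecreasing _
           (fun x => Hlink alpha beta gamma x - Hlink alpha beta gamma s)).
  - intros x. apply is_derive_bregman. intros z. apply is_derive_Hf, Hg.
  - intros x y Hxy. pose proof (Hlink_nondecreasing alpha beta gamma Hg1 x y Hxy). lra.
Qed.
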